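(* Let $\ell, c \in \mathbb{N}$. Over directed graphs, every $\mathrm{C}^2_{\ell,c}$ formula (whose free variables are therefore among $x,y$) is equivalent to a finite disjunction $$\bigvee_{i=1}^n \big( \alpha_i(x) \land \beta_i(y) \land \gamma_i(x,y) \big),$$ where $\alpha_i(x), \beta_i(y) \in \mathrm{C}^2_{\ell,c}$ and each $\gamma_i(x,y)$ is one of the following five formulas: $E(x, y) \land E(y, x)$; $E(x, y) \land \neg E(y, x)$; $\neg E(x, y) \land E(y, x)$; $\neg E(x, y) \land\neg E(y , x)\land x\neq y$; $x=y$.
   Context: A directed graph of dimension $d$ is a tuple $G=(V,E,\lambda)$ with $V$ a finite set of nodes, $E\subseteq V\times V$ with no loops $(v,v)$, and $\lambda:V\to\{0,1\}^d$. It is identified with the first-order structure with domain $V$, binary relation $E$, and unary predicates $P_1,\dots,P_d$ where $P_i=\{v:\lambda(v)_i=1\}$. $\mathrm{C}^2$ is the fragment of first-order logic (with equality, $E$, $P_1,\dots,P_d$) using only the two variables $x,y$ but allowing counting quantifiers $\exists_k$ for $k\in\mathbb{N}$, where $\exists_k x\,\varphi$ means that $\varphi$ holds for at least $k$ distinct elements. The quantifier depth of a formula is its maximal nesting of quantifiers, and its counting rank is the maximal $k$ occurring in its counting quantifiers. $\mathrm{C}^2_{\ell,c}$ denotes the $\mathrm{C}^2$ formulas of depth at most $\ell$ and counting rank at most $c$. ''Equivalent over directed graphs'' means: satisfied by the same assignments in every directed graph (as defined, i.e. loop-free). *)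

From mathcomp Require Import all_boot.
Set Implicit Arguments. Unset Strict Implicit. Unset Printing Implicit Defensive.

(* Directed graphs of dimension d: finite node type, loop-free edge relation,
   labels lambda : V -> {0,1}^d given as V -> 'I_d -> bool. *)
Record digraph (d : nat) := Digraph {
  node : finType;
  edge : rel node;
  edge_irrefl : irreflexive edge;
  lab : node -> 'I_d -> bool
}.
Arguments node {d}. Arguments edge {d}. Arguments lab {d}.

Inductive var := VX | VY.

Definition var_eqb (u v : var) : bool :=
  match u, v with VX, VX | VY, VY => true | _, _ => false end.

Inductive form (d : nat) :=
  | FTrue
  | FEq of var & var
  | FE of var & var
  | FP of 'I_d & var
  | FNot of form d
  | FAnd of form d & form d
  | FOr of form d & form d
  | FEx of nat & var & form d.  (* FEx k v phi : exists at least k v, phi *)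

Arguments FTrue {d}.
Arguments FEq {d}.
Arguments FE {d}.

Fixpoint qdepth d (f : form d) : nat :=
  match f with
  | FTrue | FEq _ _ | FE _ _ | FP _ _ => 0
  | FNot g => qdepth g
  | FAnd g h | FOr g h => maxn (qdepth g) (qdepth h)
  | FEx _ _ g => (qdepth g).+1
  end.

Fixpoint crank d (f : form d) : nat :=
  match f with
  | FTrue | FEq _ _ | FE _ _ | FP _ _ => 0
  | FNot g => crank g
  | FAnd g h | FOr g h => maxn (crank g) (crank h)
  | FEx k _ g => maxn k (crank g)
  end.

Definition inC2 d (l c : nat) (f : form d) : Prop := qdepth f <= l /\ crank f <= c.

Fixpoint free d (v : var) (f : form d) : bool :=
  match f with
  | FTrue => false
  | FEq a b | FE a b => var_eqb v a || var_eqb v b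
  | FP _ a => var_eqb v a
  | FNot g => free v g
  | FAnd g h | FOr g h => free v g || free v h
  | FEx _ w g => ~~ var_eqb v w && free v g
  end.

Definition upd (V : Type) (a : var -> V) (v : var) (n : V) : var -> V :=
  fun w => if var_eqb w v then n else a w.

Fixpoint sat {d} (G : digraph d) (a : var -> node G) (f : form d) : bool :=
  match f with
  | FTrue => true
  | FEq u v => a u == a v
  | FE u v => edge G (a u) (a v)
  | FP i v => lab G (a v) i
  | FNot g => ~~ @sat d G a g
  | FAnd g h => @sat d G a g && @sat d G a h
  | FOr g h => @sat d G a g || @sat d G a h
  | FEx k v g => k <= #|[pred n : node G | @sat d G (upd a v n) g]|
  end.

Definition gequiv d (f g : form d) : Prop :=
  forall (G : digraph d) (a : var -> node G), @sat d G a f = @sat d G a g.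

Inductive etype := EBoth | EFwd | EBwd | ENone | ESame.

Definition gamma d (t : etype) : form d :=
  match t with
  | EBoth => FAnd (FE VX VY) (FE VY VX)
  | EFwd  => FAnd (FE VX VY) (FNot (FE VY VX))
  | EBwd  => FAnd (FNot (FE VX VY)) (FE VY VX)
  | ENone => FAnd (FAnd (FNot (FE VX VY)) (FNot (FE VY VX))) (FNot (FEq VX VY))
  | ESame => FEq VX VY
  end.

Definition FFalse d : form d := FNot FTrue.
Definition bigOr d (s : seq (form d)) : form d := foldr (@FOr d) (FFalse d) s.

Definition normal_disj d (s : seq (form d * form d * etype)) : form d :=
  bigOr [seq FAnd (FAnd t.1.1 t.1.2) (gamma d t.2) | t <- s].

(** Since C^2 has only the variables x and y, every quantified subformula
    binds one of them and so speaks about the other one alone.  The only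
    formulas mixing x and y are the atoms E(x,y), E(y,x) and x = y, and their
    truth depends only on the edge type of (x,y); as there are no loops, the
    five [gamma] formulas partition all pairs of nodes.  So it suffices to
    assign to each edge type a disjunction of conjunctions α(x) ∧ β(y).  Such
    assignments are closed under disjunction (concatenation), conjunction
    (pairwise conjunction of the terms) and negation (by De Morgan,
    ¬(α ∧ β) = (¬α ∧ ⊤) ∨ (⊤ ∧ ¬β), and a conjunction of such disjunctions
    distributes back into the required shape).  None of these operations
    nests quantifiers or introduces counting quantifiers, so the α and β stay
    in C^2_{l,c}. *)

From mathcomp Require Import all_boot.
From HB Require Import structures.
From Stdlib Require Lists.List.
Set Implicit Arguments. Unset Strict Implicit. Unset Printing Implicit Defensive.

Definition etype_eqb (t u : etype) : bool :=
  match t, u with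
  | EBoth, EBoth | EFwd, EFwd | EBwd, EBwd | ENone, ENone | ESame, ESame => true
  | _, _ => false
  end.

Lemma etype_eqP : Equality.axiom etype_eqb.
Proof. by case; case; constructor. Qed.

HB.instance Definition _ := hasDecEq.Build etype etype_eqP.

Definition etypes : seq etype := [:: EBoth; EFwd; EBwd; ENone; ESame].

Lemma all_In (T : Type) (P : pred T) (s : seq T) (x : T) :
  all P s -> List.In x s -> P x.
Proof. by elim: s => //= y s IHs /andP[Py Ps] [<- | /IHs]; last exact. Qed.

Section SeparatedNormalForm.

Variables (d l c : nat).

Implicit Types (G : digraph d) (f g : form d) (p : form d * form d).

Definition etype_of G (a : var -> node G) : etype :=
  let x := a VX in let y := a VY in
  if x == y then ESame
  else if edge G x y then (if edge G y x then EBoth else EFwd)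
  else (if edge G y x then EBwd else ENone).

Section FixedAssignment.

Variables (G : digraph d) (a : var -> node G).

Lemma eq_xy_etype : (a VX == a VY) = (etype_of a == ESame).
Proof.
rewrite /etype_of; case: eqP => // _.
by case: (edge G (a VX) _); case: (edge G (a VY) _).
Qed.

Lemma edge_xy_etype : edge G (a VX) (a VY) = (etype_of a \in [:: EBoth; EFwd]).
Proof.
rewrite /etype_of; case: eqP => [-> | _]; first by rewrite edge_irrefl.
by case: (edge G (a VX) _); case: (edge G (a VY) _).
Qed.

Lemma edge_yx_etype : edge G (a VY) (a VX) = (etype_of a \in [:: EBoth; EBwd]).
Proof.
rewrite /etype_of; case: eqP => [-> | _]; first by rewrite edge_irrefl.
by case: (edge G (a VX) _); case: (edge G (a VY) _).
Qed.

Lemma sat_gamma t : sat a (gamma d t) = (etype_of a == t).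
Proof.
case: t; rewrite /= ?eq_xy_etype ?edge_xy_etype ?edge_yx_etype;
  by case: (etype_of a).
Qed.

Lemma sat_bigOr fs : sat a (bigOr fs) = has (sat a) fs.
Proof. by elim: fs => //= f fs ->. Qed.

Definition pair_sat p := sat a p.1 && sat a p.2.

Definition and_pairs (s1 s2 : seq (form d * form d)) :=
  [seq (FAnd p.1 q.1, FAnd p.2 q.2) | p <- s1, q <- s2].

Definition neg_pairs (s : seq (form d * form d)) :=
  foldr (fun p => and_pairs [:: (FNot p.1, FTrue); (FTrue, FNot p.2)])
        [:: (FTrue, FTrue)] s.

Lemma has_and_pairs s1 s2 :
  has pair_sat (and_pairs s1 s2) = has pair_sat s1 && has pair_sat s2.
Proof.
elim: s1 => //= p s1 IHs1; rewrite has_cat IHs1 andb_orl has_map; congr orb.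
rewrite (@eq_has _ _ (fun q => pair_sat p && pair_sat q)) => [|q]; last first.
  by rewrite /pair_sat /= andbACA.
by case: (pair_sat p) => //; rewrite has_pred0.
Qed.

Lemma has_neg_pairs s : has pair_sat (neg_pairs s) = ~~ has pair_sat s.
Proof.
elim: s => //= p s IHs; rewrite has_and_pairs IHs negb_or /pair_sat /=.
by rewrite negb_and andbT orbF.
Qed.

End FixedAssignment.

(** A pair (α, β) stands for α(x) ∧ β(y) and a list of pairs for their
    disjunction. *)
Definition nform := etype -> seq (form d * form d).

Definition represents (N : nform) f :=
  forall G (a : var -> node G), sat a f = has (pair_sat a) (N (etype_of a)).

Definition nform_seq (N : nform) : seq (form d * form d * etype) :=
  [seq (p, t) | t <- etypes, p <- N t].

Lemma sat_normal_disj G (a : var -> node G) (N : nform) :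
  sat a (normal_disj (nform_seq N)) = has (pair_sat a) (N (etype_of a)).
Proof.
rewrite sat_bigOr has_map.
have sat_term t p : sat a (FAnd (FAnd p.1 p.2) (gamma d t)) =
                    (etype_of a == t) && pair_sat a p.
  by rewrite /= sat_gamma andbC.
rewrite /nform_seq; case: (etype_of a) sat_term => sat_term;
  by rewrite /= !has_cat !has_map !(eq_has (sat_term _)) /= !has_pred0 ?orbF.
Qed.

Definition inC2b f := (qdepth f <= l) && (crank f <= c).

Lemma inC2P f : reflect (inC2 l c f) (inC2b f).
Proof. exact: andP. Qed.

Lemma inC2b_and f g : inC2b (FAnd f g) = inC2b f && inC2b g.
Proof. by rewrite /inC2b /= !geq_max andbACA. Qed.

Lemma inC2b_or f g : inC2b (FOr f g) = inC2b f && inC2b g.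
Proof. exact: inC2b_and. Qed.

Definition avoids (v : var) f := inC2b f && ~~ free v f.

Lemma avoids_and v f g : avoids v (FAnd f g) = avoids v f && avoids v g.
Proof. by rewrite /avoids inC2b_and /= negb_or andbACA. Qed.

Definition separated p := avoids VY p.1 && avoids VX p.2.

Lemma all_and_pairs s1 s2 :
  all separated s1 -> all separated s2 -> all separated (and_pairs s1 s2).
Proof.
elim: s1 => //= p s1 IHs1 /andP[sep_p sep_s1] sep_s2.
rewrite all_cat IHs1 // andbT all_map; apply: sub_all sep_s2 => q /andP[q1 q2].
by case/andP: sep_p => p1 p2; rewrite /separated /= !avoids_and p1 p2 q1 q2.
Qed.

Lemma all_neg_pairs s : all separated s -> all separated (neg_pairs s).
Proof.
elim: s => //= p s IHs /andP[/andP[p1 p2] /IHs sep_s].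
apply: all_and_pairs => //; move: p1 p2.
by rewrite /= /separated /avoids /inC2b /= => -> ->.
Qed.

Lemma all_nform_seq (N : nform) :
  (forall t, all separated (N t)) -> all (separated \o fst) (nform_seq N).
Proof.
move=> sepN; rewrite /nform_seq; elim: etypes => //= t ts IHts.
by rewrite all_cat all_map IHts andbT; exact: sepN.
Qed.

Definition has_nform f :=
  exists2 N : nform, (forall t, all separated (N t)) & represents N f.

Lemma has_nform_avoidsY f : avoids VY f -> has_nform f.
Proof.
move=> f_x; exists (fun=> [:: (f, FTrue)]) => [t | G a].
  by rewrite /= /separated f_x.
by rewrite /= /pair_sat orbF andbT.
Qed.

Lemma has_nform_avoidsX f : avoids VX f -> has_nform f.
Proof.
move=> f_y; exists (fun=> [:: (FTrue, f)]) => [t | G a].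
  by rewrite /= /separated f_y.
by rewrite /= /pair_sat orbF.
Qed.

Lemma has_nform_etype f (P : pred etype) :
  (forall G (a : var -> node G), sat a f = P (etype_of a)) -> has_nform f.
Proof.
move=> satf; exists (fun t => if P t then [:: (FTrue, FTrue)] else [::]).
  by move=> t; case: (P t).
by move=> G a; rewrite satf; case: (P _).
Qed.

Lemma has_nform_not f : has_nform f -> has_nform (FNot f).
Proof.
case=> N sepN reprN; exists (fun t => neg_pairs (N t)) => [t | G a].
  exact: all_neg_pairs.
by rewrite has_neg_pairs /= reprN.
Qed.

Lemma has_nform_and f g : has_nform f -> has_nform g -> has_nform (FAnd f g).
Proof.
case=> N sepN reprN [M sepM reprM].
exists (fun t => and_pairs (N t) (M t)) => [t | G a].
  exact: all_and_pairs.
by rewrite has_and_pairs /= reprN reprM.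
Qed.

Lemma has_nform_or f g : has_nform f -> has_nform g -> has_nform (FOr f g).
Proof.
case=> N sepN reprN [M sepM reprM].
exists (fun t => N t ++ M t) => [t | G a].
  by rewrite all_cat sepN sepM.
by rewrite has_cat /= reprN reprM.
Qed.

Lemma has_nform_C2 f : inC2b f -> has_nform f.
Proof.
elim: f => [| u v | u v | i v | f IHf | f IHf g IHg | f IHf g IHg | k v f _] f_C2.
- exact: has_nform_avoidsY.
- case: u v {f_C2} => [] []; try by [apply: has_nform_avoidsY | apply: has_nform_avoidsX].
  + by apply: (@has_nform_etype _ (pred1 ESame)) => G a; rewrite /= eq_xy_etype.
  + by apply: (@has_nform_etype _ (pred1 ESame)) => G a; rewrite /= eq_sym eq_xy_etype.
- case: u v {f_C2} => [] []; try by [apply: has_nform_avoidsY | apply: has_nform_avoidsX].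
  + apply: (@has_nform_etype _ (mem [:: EBoth; EFwd])) => G a.
    by rewrite /= edge_xy_etype.
  + apply: (@has_nform_etype _ (mem [:: EBoth; EBwd])) => G a.
    by rewrite /= edge_yx_etype.
- by case: v {f_C2}; [apply: has_nform_avoidsY | apply: has_nform_avoidsX].
- exact/has_nform_not/IHf.
- by move: f_C2; rewrite inC2b_and => /andP[/IHf + /IHg]; apply: has_nform_and.
- by move: f_C2; rewrite inC2b_or => /andP[/IHf + /IHg]; apply: has_nform_or.
- by case: v f_C2 => f_C2; [apply: has_nform_avoidsX | apply: has_nform_avoidsY];
    rewrite /avoids f_C2.
Qed.

End SeparatedNormalForm.

Theorem lemma1 (d l c : nat) (phi : form d) :
  inC2 l c phi ->
  exists s : seq (form d * form d * etype),
    (forall t, List.In t s ->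
       inC2 l c t.1.1 /\ ~~ free VY t.1.1 /\
       inC2 l c t.1.2 /\ ~~ free VX t.1.2) /\
    gequiv phi (normal_disj s).
Proof.
move=> /inC2P /has_nform_C2 [N sepN reprN]; exists (nform_seq N); split.
  move=> t /(all_In (all_nform_seq sepN)).
  by case/andP=> /andP[/inC2P ? ?] /andP[/inC2P ? ?].
by move=> G a; rewrite sat_normal_disj reprN.
Qed.
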